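(* There exist $\varepsilon_0>0$ and a function $\delta:(0,\varepsilon_0)\to(0,\infty)$ with $\delta(\varepsilon)\to0$ as $\varepsilon\to0$ such that the following holds. Let $(\varphi_i)_{i\in\mathbb{N}}\subset[0,\infty)$ with $\sum_i\varphi_i=\Phi>0$ and $\varphi_0\ge\varphi_i$ for all $i\in\mathbb{N}$, and suppose that for some $\varepsilon\in(0,\varepsilon_0)$, $$\sum_i\varphi_i^{1/2}-\Phi^{1/2}\le\varepsilon\Phi^{1/2}.$$ Then $\Phi-\varphi_0\le\delta(\varepsilon)\Phi$. *)

From Stdlib Require Import Reals.
From Coquelicot Require Import Coquelicot.

(* Since [phi i <= phi 0], every term satisfies [sqrt (phi i) >= phi i / sqrt (phi 0)], so
   [Series (sqrt o phi) >= Phi / sqrt (phi 0)].  The hypothesis then gives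
   [sqrt Phi <= (1 + e) sqrt (phi 0)], i.e. [phi 0 >= Phi / (1 + e)^2], and one can take
   [delta e = 1 - (1 + e)^-2].  No smallness of [e] is needed, so any [eps0] works. *)
From Stdlib Require Import Reals.
From Coquelicot Require Import Coquelicot.
From Stdlib Require Import Lra Psatz.
Open Scope R_scope.

Definition tail_ratio (e : R) : R := 1 - / (1 + e) ^ 2.

Lemma tail_ratio_pos (e : R) : 0 < e -> 0 < tail_ratio e.
Proof.
  intros He; unfold tail_ratio.
  assert (Hinv : / (1 + e) ^ 2 < 1).
  { rewrite <- Rinv_1; apply Rinv_lt_contravar; nra. }
  lra.
Qed.

Lemma tail_ratio_cvg_0 : filterlim tail_ratio (at_right 0) (locally 0).
Proof.
  apply (filterlim_filter_le_1 (F := locally 0)); [apply filter_le_within|].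
  replace (locally 0) with (locally (tail_ratio 0)) at 2.
  2: { unfold tail_ratio; f_equal; field. }
  apply (ex_derive_continuous (K := R_AbsRing) (V := R_NormedModule)).
  unfold tail_ratio; auto_derive; lra.
Qed.

Lemma tail_ratio_bound (e Phi a : R) :
  0 <= e -> Phi <= (1 + e) ^ 2 * a -> Phi - a <= tail_ratio e * Phi.
Proof.
  intros He HPhi; unfold tail_ratio.
  assert (Hk : 0 < (1 + e) ^ 2) by nra.
  assert (Ha : Phi / (1 + e) ^ 2 <= a) by (apply Rle_div_l; lra).
  unfold Rdiv in Ha; lra.
Qed.

Lemma is_series_null (a : nat -> R) (l : R) :
  (forall n, a n = 0) -> is_series a l -> l = 0.
Proof.
  intros Ha Hl.
  assert (Hl0 : is_series a (l * 0)).
  { apply (is_series_ext (fun n => a n * 0)); [intro n; rewrite Ha; apply Rmult_0_r|].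
    now apply is_series_scal_r. }
  rewrite <- (is_series_unique _ _ Hl), (is_series_unique _ _ Hl0); ring.
Qed.

Lemma is_series_max_term_pos (phi : nat -> R) (Phi : R) (k : nat) :
  (forall i, 0 <= phi i) -> (forall i, phi i <= phi k) ->
  is_series phi Phi -> 0 < Phi -> 0 < phi k.
Proof.
  intros Hpos Hmax HPhi HPhi_pos.
  destruct (Rle_lt_dec (phi k) 0) as [Hk|Hk]; [exfalso|exact Hk].
  assert (Hnull : forall i, phi i = 0) by (intro i; specialize (Hpos i); specialize (Hmax i); lra).
  rewrite (is_series_null _ _ Hnull HPhi) in HPhi_pos; lra.
Qed.

Lemma div_sqrt_le_sqrt (x m : R) : 0 < m -> 0 <= x <= m -> x / sqrt m <= sqrt x.
Proof.
  intros Hm Hx.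
  apply Rle_div_l; [now apply sqrt_lt_R0|].
  assert (Hxm : sqrt x <= sqrt m) by (apply sqrt_le_1_alt; lra).
  assert (Hx0 : 0 <= sqrt x) by apply sqrt_pos.
  rewrite <- (sqrt_sqrt x) at 1 by lra.
  now apply Rmult_le_compat_l.
Qed.

Lemma Series_sqrt_ge (phi : nat -> R) (Phi m : R) :
  0 < m -> (forall i, 0 <= phi i <= m) -> is_series phi Phi ->
  ex_series (fun i => sqrt (phi i)) ->
  Phi / sqrt m <= Series (fun i => sqrt (phi i)).
Proof.
  intros Hm Hphi HPhi Hsqrt.
  unfold Rdiv; rewrite <- (is_series_unique _ _ (is_series_scal_r (/ sqrt m) _ _ HPhi)).
  apply Series_le; [|exact Hsqrt].
  intro i; split.
  - apply Rmult_le_pos; [apply Hphi|].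
    apply Rlt_le, Rinv_0_lt_compat, sqrt_lt_R0, Hm.
  - now apply div_sqrt_le_sqrt.
Qed.

Lemma le_sqr_mul_of_div_sqrt_le (Phi a k : R) :
  0 < Phi -> 0 < a -> Phi / sqrt a <= k * sqrt Phi -> Phi <= k ^ 2 * a.
Proof.
  intros HPhi Ha H.
  apply (Rle_div_l Phi (k * sqrt Phi) (sqrt a)) in H; [|now apply sqrt_lt_R0].
  assert (Hs : 0 < sqrt Phi) by now apply sqrt_lt_R0.
  pose proof (sqrt_sqrt Phi (Rlt_le _ _ HPhi)) as HPhi_sq.
  pose proof (sqrt_sqrt a (Rlt_le _ _ Ha)) as Ha_sq.
  assert (Hsr : sqrt Phi <= k * sqrt a).
  { apply (Rmult_le_reg_l (sqrt Phi)); [exact Hs|].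
    rewrite HPhi_sq; lra. }
  nra.
Qed.

Theorem proposition2p3 :
  exists eps0 : R, 0 < eps0 /\
  exists delta : R -> R,
    (forall e : R, 0 < e < eps0 -> 0 < delta e) /\
    filterlim delta (at_right 0) (locally 0) /\
    forall (phi : nat -> R) (Phi e : R),
      (forall i : nat, 0 <= phi i) ->
      is_series phi Phi ->
      0 < Phi ->
      (forall i : nat, phi i <= phi 0%nat) ->
      0 < e < eps0 ->
      ex_series (fun i : nat => sqrt (phi i)) ->
      Series (fun i : nat => sqrt (phi i)) - sqrt Phi <= e * sqrt Phi ->
      Phi - phi 0%nat <= delta e * Phi.
Proof.
  exists 1; split; [lra|].
  exists tail_ratio; split; [|split].
  - intros e He; apply tail_ratio_pos; lra.
  - exact tail_ratio_cvg_0.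
  - intros phi Phi e Hpos HPhi HPhi_pos Hmax He Hsqrt Hconc.
    pose proof (is_series_max_term_pos phi Phi 0 Hpos Hmax HPhi HPhi_pos) as Ha.
    pose proof (Series_sqrt_ge phi Phi (phi 0%nat) Ha
                  (fun i => conj (Hpos i) (Hmax i)) HPhi Hsqrt) as Hlow.
    apply tail_ratio_bound; [lra|].
    apply le_sqr_mul_of_div_sqrt_le; [exact HPhi_pos|exact Ha|lra].
Qed.
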